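(* Let $(M,J,c)$ be a conformal almost Hermitian structure of dimension $n\ge4$ and let $\nabla^W$ be a Weyl connection, i.e. a torsion-free affine connection such that for each $g\in c$ there is a 1-form $B$ with $\nabla^W_ag_{bc}=2B_ag_{bc}$. Let $G^W(X,Y):=-\frac12J(\nabla^W_YJ)X$. Then the following are equivalent: (i) $\nabla^W$ is compatible with $J$, i.e. $\nabla^W_aJ^a{}_b=0$; (ii) $G^W$ is totally trace-free; (iii) $JG^W$ is totally trace-free; (iv) $(X,Y)\mapsto G^W(X,JY)$ is totally trace-free; (v) $(X,Y)\mapsto G^W(JX,JY)$ is totally trace-free. Moreover, when these hold, $\nabla^W=\nabla^c$.
   Context: A conformal almost Hermitian structure: $J$ almost complex ($J^2=-\mathrm{id}$), $c$ a conformal class of Riemannian metrics for which $J$ is orthogonal. A $(1,2)$ tensor $H^a{}_{bc}$ is totally trace-free if all contractions vanish: $H^a{}_{ab}=0$, $H^a{}_{ba}=0$, and $g^{bc}H^a{}_{bc}=0$ for $g\in c$. $\nabla^c$ denotes the canonical Weyl connection: for $g\in c$ with Levi-Civita connection $\nabla$, $B_a:=\frac1{n-2}J^c{}_b\nabla_cJ^b{}_a$ and $\nabla^c_aY^b:=\nabla_aY^b-B_aY^b+B^bY_a-B_cY^c\delta^b_a$; this is independent of $g\in c$. *)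

(* Local coordinate model of a conformal almost
   Hermitian manifold: an open set U of R^n (points are row vectors 'rV[R]_n),
   with all tensors given by their components in the coordinate frame. *)
From HB Require Import structures.
From mathcomp Require Import all_boot all_order all_algebra.
From mathcomp Require Import all_classical all_reals all_analysis.
Set Implicit Arguments. Unset Strict Implicit. Unset Printing Implicit Defensive.
Import Order.TTheory GRing.Theory Num.Theory.
Import numFieldNormedType.Exports.
Local Open Scope ring_scope.
Local Open Scope classical_set_scope.

Section Defs.
Variables (R : realType) (n : nat).
Local Notation pt := 'rV[R]_n.

(* (0,2)- or (1,1)-tensor fields: T x a b  is  T_{ab}  resp.  T^a_b  at x *)
Definition tensor2 := pt -> 'I_n -> 'I_n -> R.
(* (1,2)-tensor fields / connection coefficients: H x a b c is H^a_{bc} at x *)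
Definition tensor3 := pt -> 'I_n -> 'I_n -> 'I_n -> R.

Definition pd (f : pt -> R) (i : 'I_n) (x : pt) : R := derive f x (delta_mx 0 i).

Definition gmx (g : tensor2) (x : pt) : 'M[R]_n := \matrix_(i, j) g x i j.
Definition ginv (g : tensor2) (x : pt) (a b : 'I_n) : R := invmx (gmx g x) a b.

Definition is_metric (g : tensor2) (x : pt) : Prop :=
  (forall a b, g x a b = g x b a) /\
  (forall v : 'rV[R]_n, v != 0 -> 0 < (v *m gmx g x *m v^T) 0 0).

Definition almost_complex (J : tensor2) (x : pt) : Prop :=
  forall a b, \sum_c J x a c * J x c b = - (a == b)%:R.

Definition orthogonal_for (g J : tensor2) (x : pt) : Prop :=
  forall a b, \sum_c \sum_d J x c a * J x d b * g x c d = g x a b.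

(* Levi-Civita Christoffel symbols Gamma^a_{bc} of g, convention
   nabla_b Y^a = d_b Y^a + Gamma^a_{bc} Y^c *)
Definition levi_civita (g : tensor2) : tensor3 := fun x a b c =>
  2^-1 * \sum_d ginv g x a d *
    (pd (fun y => g y d c) b x + pd (fun y => g y d b) c x
     - pd (fun y => g y b c) d x).

Definition cov_metric (Gam : tensor3) (g : tensor2) (x : pt) (a b c : 'I_n) : R :=
  pd (fun y => g y b c) a x
  - \sum_d (Gam x d a b * g x d c + Gam x d a c * g x b d).

Definition cov_endo (Gam : tensor3) (J : tensor2) (x : pt) (a b c : 'I_n) : R :=
  pd (fun y => J y b c) a x
  + \sum_d (Gam x b a d * J x d c - Gam x d a c * J x b d).

Definition is_weyl_connection (U : set pt) (g : tensor2) (GW : tensor3) : Prop :=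
  (forall x, U x -> forall a b c, GW x a b c = GW x a c b) /\
  exists B : pt -> 'I_n -> R,
    forall x, U x -> forall a b c, cov_metric GW g x a b c = 2 * B x a * g x b c.

Definition canonB (g J : tensor2) (x : pt) (a : 'I_n) : R :=
  (n%:R - 2)^-1 * \sum_b \sum_c J x c b * cov_endo (levi_civita g) J x c b a.

Definition canonical_weyl (g J : tensor2) : tensor3 := fun x b a c =>
  levi_civita g x b a c
  - canonB g J x a * (b == c)%:R
  + (\sum_d ginv g x b d * canonB g J x d) * g x a c
  - canonB g J x c * (b == a)%:R.

(* G^W(X,Y) = -1/2 J (nabla^W_Y J) X ;  (G^W)^a_{bc} with X^b, Y^c *)
Definition GWtensor (GW : tensor3) (J : tensor2) : tensor3 := fun x a b c =>
  - 2^-1 * \sum_d J x a d * cov_endo GW J x c d b.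

Definition JH (J : tensor2) (H : tensor3) : tensor3 := fun x a b c =>
  \sum_d J x a d * H x d b c.
Definition H_XJY (J : tensor2) (H : tensor3) : tensor3 := fun x a b c =>
  \sum_e H x a b e * J x e c.
Definition H_JXJY (J : tensor2) (H : tensor3) : tensor3 := fun x a b c =>
  \sum_d \sum_e H x a d e * J x d b * J x e c.

Definition totally_trace_free (U : set pt) (g : tensor2) (H : tensor3) : Prop :=
  forall x, U x ->
    (forall b, \sum_a H x a a b = 0) /\
    (forall b, \sum_a H x a b a = 0) /\
    (forall a, \sum_b \sum_c ginv g x b c * H x a b c = 0).

Definition J_compatible (U : set pt) (GW : tensor3) (J : tensor2) : Prop :=
  forall x, U x -> forall b, \sum_a cov_endo GW J x a a b = 0.

End Defs.

From HB Require Import structures.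
From mathcomp Require Import all_boot all_order all_algebra.
From mathcomp Require Import all_classical all_reals all_analysis.
From mathcomp Require Import ring.
Set Implicit Arguments. Unset Strict Implicit. Unset Printing Implicit Defensive.
Import Order.TTheory GRing.Theory Num.Theory.
Import numFieldNormedType.Exports.
Local Open Scope ring_scope.
Local Open Scope classical_set_scope.

(* Write D_c for the matrix of nabla^W_c J.  Differentiating J^2 = -1 and
   g(J., J.) = g and using nabla^W g = 2 B (x) g shows that every D_c
   anticommutes with J and is g-skew, so tr D_c = tr (J D_c) = 0.  Hence for
   each of the four tensors built from G^W the first trace vanishes
   identically, the second is a nonzero multiple of t or of t J, where
   t_b = nabla^W_a J^a_b, and the g-trace is linear in t: each tensor is
   totally trace-free iff t = 0, i.e. iff nabla^W J is compatible.
   For the last claim, the Koszul formula gives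
   nabla = nabla^W + (B (x) id + id (x) B - g (x) B^#) for the Levi-Civita
   connection; in J^c_b nabla_c J^b_a the nabla^W part vanishes when t = 0
   and the rest is (n - 2) B_a, so the canonical Weyl form is B. *)

Section MatrixFamilies.
Variables (R : comPzRingType) (n : nat).
Implicit Types (M : 'I_n -> 'M[R]_n) (A N : 'M[R]_n).

(* A (1,2)-tensor H^a_{bc} at a point is encoded by the family c |-> H(-, e_c)
   of endomorphisms, i.e. (M c) a b = H^a_{bc}. *)
Definition mxfam_contr M : 'rV[R]_n := \row_b \sum_a M a a b.

(* The family of (X, Y) |-> H(X, A Y). *)
Definition mxfam_mulr M A c : 'M[R]_n := \sum_e A e c *: M e.

Definition trace_free_fam (Gi : 'M[R]_n) M : Prop :=
  [/\ forall b, \tr (M b) = 0, mxfam_contr M = 0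
    & forall a, \sum_c (M c *m Gi) a c = 0].

Lemma mxfam_contr_mulmxr M N :
  mxfam_contr (fun c => M c *m N) = mxfam_contr M *m N.
Proof.
apply/rowP => b; rewrite !mxE; under eq_bigr do rewrite mxE.
by rewrite exchange_big /=; apply: eq_bigr => e _; rewrite mxE mulr_suml.
Qed.

Lemma mxfam_contrZ (k : R) M :
  mxfam_contr (fun c => k *: M c) = k *: mxfam_contr M.
Proof.
apply/rowP => b; rewrite !mxE mulr_sumr.
by apply: eq_bigr => a _; rewrite mxE.
Qed.

Lemma mxfam_contrN M : mxfam_contr (fun c => - M c) = - mxfam_contr M.
Proof.
rewrite -scaleN1r -mxfam_contrZ; congr mxfam_contr.
by apply/funext => c; rewrite scaleN1r.
Qed.

Lemma sum_mulmx_trmx_fam A M a :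
  \sum_c (A *m (M c)^T) a c = (A *m (mxfam_contr M)^T) a 0.
Proof.
rewrite mxE; under eq_bigr do rewrite mxE.
rewrite exchange_big /=; apply: eq_bigr => e _; rewrite !mxE mulr_sumr.
by apply: eq_bigr => c _; rewrite mxE.
Qed.

Lemma mxtrace_mxfam_mulr M A b :
  \tr (mxfam_mulr M A b) = \sum_e A e b * \tr (M e).
Proof. by rewrite /mxfam_mulr raddf_sum; apply: eq_bigr => e _; exact: mxtraceZ. Qed.

Lemma mxfam_contr_mulr M A :
  mxfam_contr (mxfam_mulr M A) = mxfam_contr (fun e => A *m M e).
Proof.
apply/rowP => b; rewrite !mxE; under eq_bigr do rewrite summxE.
rewrite exchange_big; apply: eq_bigr => e _; rewrite mxE.
by apply: eq_bigr => a _; rewrite mxE.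
Qed.

Lemma sum_mxfam_mulr_mulmx Gi M A a :
  \sum_c (mxfam_mulr M A c *m Gi) a c = \sum_e (M e *m Gi *m A^T) a e.
Proof.
under eq_bigr do rewrite mulmx_suml summxE.
rewrite exchange_big; apply: eq_bigr => e _; rewrite mxE.
by apply: eq_bigr => c _; rewrite -scalemxAl mxE [A^T _ _]mxE mulrC.
Qed.

Lemma sum_trmx_fam_eq0 (F : 'I_n -> 'M[R]_n) M A (k : R) :
  (forall c, F c = k *: (A *m (M c)^T)) -> mxfam_contr M = 0 ->
  forall a, \sum_c F c a c = 0.
Proof.
move=> eF M0 a; under eq_bigr do rewrite eF mxE.
by rewrite -mulr_sumr sum_mulmx_trmx_fam M0 trmx0 mulmx0 mxE mulr0.
Qed.

End MatrixFamilies.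

Lemma trace_free_famP (R : fieldType) (n : nat) (Gi N : 'M[R]_n)
    (M D : 'I_n -> 'M[R]_n) (k : R) :
  k != 0 -> N \in unitmx ->
  (forall b, \tr (M b) = 0) ->
  mxfam_contr M = k *: (mxfam_contr D *m N) ->
  (mxfam_contr D = 0 -> forall a, \sum_c (M c *m Gi) a c = 0) ->
  trace_free_fam Gi M <-> mxfam_contr D = 0.
Proof.
move=> k0 Nu trM eM gM; split=> [[_ M0 _]|D0]; last first.
  by split=> //; [rewrite eM D0 mul0mx scaler0 | exact: gM].
move/eqP: M0; rewrite eM scalemx_eq0 (negPf k0) /= => /eqP/(congr1 (mulmx^~ (invmx N))).
by rewrite mulmxK // mul0mx.
Qed.

Section AlmostHermitian.
Variables (R : realFieldType) (n : nat) (J G : 'M[R]_n).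
Hypothesis J2 : J *m J = - 1%:M.
Hypothesis JGJ : J^T *m G *m J = G.

Lemma unitmx_J : J \in unitmx.
Proof. by case: (@mulmx1_unit _ _ J (- J)); rewrite // mulmxN J2 opprK. Qed.

Lemma trmxJ_metric : J^T *m G = - (G *m J).
Proof.
have : J^T *m G *m J *m J = G *m J by rewrite JGJ.
by rewrite -mulmxA J2 mulmxN mulmx1 => <-; rewrite opprK.
Qed.

Section WeylDerivativeOfJ.
(* At a point: [P] is a partial derivative of J, [Q] the same partial
   derivative of g, [Gam] the matrix of Christoffel symbols in that direction
   and [b] twice the Weyl form there, so that [D] is the covariant derivative
   of J for the Weyl connection. *)
Variables (P Q Gam : 'M[R]_n) (b : R).
Hypothesis PJ : P *m J + J *m P = 0.
Hypothesis QJ : P^T *m G *m J + J^T *m Q *m J + J^T *m G *m P = Q.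
Hypothesis Qweyl : Q = Gam^T *m G + G *m Gam + b *: G.

Let D := P + Gam *m J - J *m Gam.

Lemma weyl_covJ_anticomm : D *m J = - (J *m D).
Proof.
have eDJ : D *m J = P *m J - Gam - J *m Gam *m J.
  by rewrite /D mulmxBl mulmxDl -(mulmxA Gam) J2 mulmxN mulmx1.
have eJD : J *m D = J *m P + J *m Gam *m J + Gam.
  by rewrite /D mulmxBr mulmxDr mulmxA mulmxA J2 mulNmx mul1mx opprK.
rewrite eDJ eJD; have -> : P *m J = - (J *m P) by apply/eqP; rewrite -addr_eq0 PJ.
by rewrite !opprD -addrA [- Gam + _]addrC addrA.
Qed.

(* In D^T G J + J^T G D the differentiated orthogonality of J and the Weyl
   condition cancel all terms; multiplying by J then gives skewness. *)
Lemma weyl_covJ_skew : D^T *m G = - (G *m D).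
Proof.
have eS : Gam^T *m G + G *m Gam = Q - b *: G by rewrite Qweyl addrK.
have sym0 : D^T *m G *m J + J^T *m G *m D = 0.
  have eDT : D^T = P^T + J^T *m Gam^T - Gam^T *m J^T.
    by rewrite /D !raddfB raddfD /= -!trmx_mul.
  have eDGJ : D^T *m G *m J = P^T *m G *m J + J^T *m (Gam^T *m G) *m J
                            - Gam^T *m (J^T *m G *m J).
    by rewrite eDT !mulmxBl !mulmxDl !mulmxA.
  have eJGD : J^T *m G *m D = J^T *m G *m P + J^T *m (G *m Gam) *m J
                            - J^T *m G *m J *m Gam.
    by rewrite /D !mulmxBr !mulmxDr !mulmxA.
  rewrite eDGJ eJGD JGJ.
  have eGam : J^T *m (Gam^T *m G) *m J + J^T *m (G *m Gam) *m J
              = J^T *m Q *m J - b *: G.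
    by rewrite -mulmxDl -mulmxDr eS mulmxBr mulmxBl -!scalemxAr -scalemxAl JGJ.
  have eP : P^T *m G *m J + J^T *m G *m P = Q - J^T *m Q *m J.
    by rewrite -{1}QJ addrAC addrK.
  set A1 := P^T *m G *m J; set A2 := J^T *m (Gam^T *m G) *m J.
  set A3 := J^T *m G *m P; set A4 := J^T *m (G *m Gam) *m J.
  set A5 := Gam^T *m G; set A6 := G *m Gam.
  have -> : A1 + A2 - A5 + (A3 + A4 - A6) = (A1 + A3) + (A2 + A4) - (A5 + A6).
    by rewrite addrACA [(A1 + A2) + _]addrACA opprD.
  by rewrite eP eGam /A5 /A6 eS addrA subrK subrr.
have eDJ : D^T *m G *m J = G *m J *m D.
  by apply/eqP; rewrite -subr_eq0; move: sym0; rewrite trmxJ_metric mulNmx => ->.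
have : (D^T *m G + G *m D) *m J *m J = 0.
  by rewrite mulmxDl eDJ -!mulmxA weyl_covJ_anticomm mulmxN subrr !mul0mx.
rewrite -mulmxA J2 mulmxN mulmx1 => /eqP; rewrite oppr_eq0 addr_eq0 => /eqP //.
Qed.

End WeylDerivativeOfJ.

Hypothesis Gsym : G^T = G.
Hypothesis Gunit : G \in unitmx.
Let Gi := invmx G.

Lemma invmx_metric_trmxJ : Gi *m J^T = - (J *m Gi).
Proof.
have e : Gi *m (J^T *m G) *m Gi = Gi *m J^T.
  by rewrite -!mulmxA mulmxV // mulmx1.
by rewrite -e trmxJ_metric mulmxN mulNmx mulmxA mulVmx // mul1mx.
Qed.

Lemma mxtrace_J : \tr J = 0.
Proof.
have eGJ : (G *m J)^T = - (G *m J) by rewrite trmx_mul Gsym trmxJ_metric.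
have eJ : \tr J = \tr (G *m J *m Gi) by rewrite mxtrace_mulC mulmxA mulVmx // mul1mx.
apply/eqP; rewrite -eqNr {1}eJ -mxtrace_tr trmx_mul eGJ trmx_inv Gsym.
by rewrite mulmxN raddfN opprK mulmxA mulVmx // mul1mx.
Qed.

Variable D : 'I_n -> 'M[R]_n.
Hypothesis DJ : forall c, D c *m J = - (J *m D c).
Hypothesis DG : forall c, (D c)^T *m G = - (G *m D c).

Lemma covJ_invmx c : D c *m Gi = - (Gi *m (D c)^T).
Proof.
have e : Gi *m ((D c)^T *m G) *m Gi = Gi *m (D c)^T.
  by rewrite -!mulmxA mulmxV // mulmx1.
by rewrite -e DG mulmxN mulNmx mulmxA mulVmx // mul1mx opprK.
Qed.

Lemma mxtrace_JcovJ c : \tr (J *m D c) = 0.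
Proof. by apply/eqP; rewrite -eqNr -raddfN -DJ mxtrace_mulC. Qed.

Lemma JcovJJ c : J *m D c *m J = D c.
Proof. by rewrite -mulmxA DJ mulmxN mulmxA J2 mulNmx mul1mx opprK. Qed.

Lemma mxtrace_covJ c : \tr (D c) = 0.
Proof.
apply/eqP; rewrite -eqNr -{1}JcovJJ mxtrace_mulC mulmxA J2.
by rewrite mulNmx mul1mx raddfN opprK.
Qed.

Lemma mxfam_contr_JcovJ : mxfam_contr (fun c => J *m D c) = - (mxfam_contr D *m J).
Proof.
rewrite -mxfam_contr_mulmxr -mxfam_contrN; congr mxfam_contr.
by apply/funext => c; rewrite DJ opprK.
Qed.

Lemma half_neq0 : (2^-1 : R) != 0.
Proof. by rewrite invr_eq0 pnatr_eq0. Qed.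

Lemma trace_free_GW :
  trace_free_fam Gi (fun c => - 2^-1 *: (J *m D c)) <-> mxfam_contr D = 0.
Proof.
apply: (trace_free_famP (k := 2^-1) half_neq0 unitmx_J).
- by move=> b; rewrite mxtraceZ mxtrace_JcovJ mulr0.
- by rewrite mxfam_contrZ mxfam_contr_JcovJ scaleNr scalerN opprK.
- apply: (sum_trmx_fam_eq0 (A := J *m Gi) (k := 2^-1)) => c.
  by rewrite -scalemxAl -mulmxA covJ_invmx mulmxN mulmxA scalerN -scaleNr opprK.
Qed.

Lemma trace_free_JGW :
  trace_free_fam Gi (fun c => 2^-1 *: D c) <-> mxfam_contr D = 0.
Proof.
apply: (trace_free_famP (k := 2^-1) (N := 1%:M) half_neq0 (unitmx1 _ _)).
- by move=> b; rewrite mxtraceZ mxtrace_covJ mulr0.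
- by rewrite mxfam_contrZ mulmx1.
- apply: (sum_trmx_fam_eq0 (A := Gi) (k := - 2^-1)) => c.
  by rewrite -scalemxAl covJ_invmx scaleNr scalerN.
Qed.

Lemma trace_free_GW_XJY :
  trace_free_fam Gi (mxfam_mulr (fun e => - 2^-1 *: (J *m D e)) J)
  <-> mxfam_contr D = 0.
Proof.
apply: (trace_free_famP (k := 2^-1) (N := 1%:M) half_neq0 (unitmx1 _ _)).
- move=> b; rewrite mxtrace_mxfam_mulr big1 // => e _.
  by rewrite mxtraceZ mxtrace_JcovJ !mulr0.
- rewrite mxfam_contr_mulr mulmx1 -mxfam_contrZ; congr mxfam_contr.
  by apply/funext => e; rewrite -scalemxAr mulmxA J2 mulNmx mul1mx scaleNr scalerN opprK.
- move=> D0 a; rewrite sum_mxfam_mulr_mulmx; move: D0 a.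
  apply: (sum_trmx_fam_eq0 (A := Gi) (k := - 2^-1)) => e.
  rewrite -!scalemxAl; congr (_ *: _).
  by rewrite -mulmxA invmx_metric_trmxJ mulmxN !mulmxA JcovJJ covJ_invmx opprK.
Qed.

Lemma trace_free_GW_JXJY :
  trace_free_fam Gi (mxfam_mulr (fun e => - 2^-1 *: D e) J) <-> mxfam_contr D = 0.
Proof.
apply: (trace_free_famP (k := 2^-1) half_neq0 unitmx_J).
- move=> b; rewrite mxtrace_mxfam_mulr big1 // => e _.
  by rewrite mxtraceZ mxtrace_covJ !mulr0.
- rewrite mxfam_contr_mulr.
  transitivity (mxfam_contr (fun e => - 2^-1 *: (J *m D e))).
    by congr mxfam_contr; apply/funext => e; rewrite scalemxAr.
  by rewrite mxfam_contrZ mxfam_contr_JcovJ scaleNr scalerN opprK.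
- move=> D0 a; rewrite sum_mxfam_mulr_mulmx; move: D0 a.
  apply: (sum_trmx_fam_eq0 (A := J *m Gi) (k := 2^-1)) => e.
  rewrite -!scalemxAl -mulmxA invmx_metric_trmxJ mulmxN mulmxA DJ mulNmx opprK.
  by rewrite -mulmxA covJ_invmx mulmxN mulmxA scalerN scaleNr opprK.
Qed.

End AlmostHermitian.

Lemma sum_supp1 (R : nmodType) (n : nat) (F : 'I_n -> R) j :
  (forall i, i != j -> F i = 0) -> \sum_i F i = F j.
Proof. by move=> F0; rewrite (bigD1 j) //= big1 ?addr0. Qed.

Section WeylShift.
Variables (R : numFieldType) (n : nat).
Variables (g gi : 'I_n -> 'I_n -> R) (B : 'I_n -> R).
Hypothesis gsym : forall i j, g i j = g j i.
Hypothesis gi_g : forall a e, \sum_d gi a d * g d e = (a == e)%:R.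
Hypothesis g_gi : forall a e, \sum_d g a d * gi d e = (a == e)%:R.

Definition raise i := \sum_d gi i d * B d.

(* The Levi-Civita connection minus the Weyl connection with 1-form B. *)
Definition weyl_shift i j k := B j * (i == k)%:R + B k * (i == j)%:R - raise i * g j k.

Lemma lower_raise a : \sum_c g c a * raise c = B a.
Proof.
rewrite /raise; under eq_bigr do rewrite mulr_sumr.
rewrite exchange_big /= (eq_bigr (fun e => (\sum_c g a c * gi c e) * B e)); last first.
  by move=> e _; rewrite mulr_suml; apply: eq_bigr => c _; rewrite gsym mulrA.
under eq_bigr do rewrite g_gi.
by rewrite (sum_supp1 (j := a)) ?eqxx ?mul1r // => i; rewrite eq_sym => /negPf ->; rewrite mul0r.
Qed.

(* Koszul formula: [dg c a b] stands for the partial derivative d_c g_{ab}. *)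
Lemma koszul_weyl (Gam dg : 'I_n -> 'I_n -> 'I_n -> R) :
  (forall a b c, Gam a b c = Gam a c b) ->
  (forall a b c, dg a b c =
     \sum_d (Gam d a b * g d c + Gam d a c * g b d) + 2 * B a * g b c) ->
  forall a b c, 2^-1 * \sum_d gi a d * (dg b d c + dg c d b - dg d b c) =
                Gam a b c + weyl_shift a b c.
Proof.
move=> Gsym dgW a b c.
have e d : dg b d c + dg c d b - dg d b c =
   2 * (\sum_e Gam e b c * g d e) + 2 * (B b * g d c + B c * g d b - B d * g b c).
  rewrite !dgW.
  have s : \sum_e (Gam e b d * g e c + Gam e b c * g d e)
         + \sum_e (Gam e c d * g e b + Gam e c b * g d e)
         - \sum_e (Gam e d b * g e c + Gam e d c * g b e)
         = 2 * (\sum_e Gam e b c * g d e).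
    rewrite -big_split -sumrB /= mulr_sumr; apply: eq_bigr => e _.
    by rewrite (Gsym e d b) (Gsym e d c) (Gsym e c b) (gsym b e); ring.
  by rewrite -s; ring.
under eq_bigr do rewrite e.
rewrite (eq_bigr (fun d => 2 * ((gi a d * \sum_e Gam e b c * g d e)
      + B b * (gi a d * g d c) + B c * (gi a d * g d b) - g b c * (gi a d * B d)))); last first.
  by move=> d _; ring.
rewrite -mulr_sumr mulrA mulVf ?mul1r ?pnatr_eq0 //.
rewrite !sumrB !big_split /= -!mulr_sumr !gi_g /weyl_shift /raise.
under eq_bigr do rewrite mulr_sumr.
rewrite exchange_big /= (eq_bigr (fun k => Gam k b c * (a == k)%:R)); last first.
  move=> k _; rewrite (eq_bigr (fun d => Gam k b c * (gi a d * g d k))); last first.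
    by move=> d _; ring.
  by rewrite -mulr_sumr gi_g.
rewrite (sum_supp1 (j := a)) => [|i]; last by rewrite eq_sym => /negPf ->; rewrite mulr0.
by rewrite eqxx mulr1; ring.
Qed.

Variable J : 'I_n -> 'I_n -> R.
Hypothesis J2 : forall i j, \sum_k J i k * J k j = - (i == j)%:R.
Hypothesis trJ : \sum_i J i i = 0.
Hypothesis Jorth : forall i j, \sum_c \sum_d J c i * J d j * g c d = g i j.

Lemma weyl_shift_covJ b c a :
  \sum_d (weyl_shift b c d * J d a - weyl_shift d c a * J b d) =
  (b == c)%:R * (\sum_d B d * J d a) - raise b * (\sum_d g c d * J d a)
  - B a * J b c + g c a * (\sum_d J b d * raise d).
Proof.
rewrite /weyl_shift.
rewrite (eq_bigr (fun d => B c * ((b == d)%:R * J d a) + (b == c)%:R * (B d * J d a)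
   + (- raise b) * (g c d * J d a) + (- B c) * ((d == a)%:R * J b d)
   + (- B a) * ((d == c)%:R * J b d) + g c a * (J b d * raise d))); last first.
  by move=> d _; ring.
rewrite !big_split /= -!mulr_sumr.
rewrite (sum_supp1 (F := fun d => (b == d)%:R * J d a) (j := b)); last first.
  by move=> i; rewrite eq_sym => /negPf ->; rewrite mul0r.
rewrite (sum_supp1 (F := fun d => (d == a)%:R * J b d) (j := a)); last first.
  by move=> i /negPf ->; rewrite mul0r.
rewrite (sum_supp1 (F := fun d => (d == c)%:R * J b d) (j := c)); last first.
  by move=> i /negPf ->; rewrite mul0r.
by rewrite !eqxx !mul1r; ring.
Qed.

(* Only the terms built from B^# survive the contraction with J, each
   contributing a multiple of B; the dimension enters through J^c_b J^b_c = -n. *)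
Lemma weyl_shift_covJ_contr a :
  \sum_b \sum_c J c b * \sum_d (weyl_shift b c d * J d a - weyl_shift d c a * J b d)
  = (n%:R - 2) * B a.
Proof.
set X := \sum_d B d * J d a.
have e b c : J c b * \sum_d (weyl_shift b c d * J d a - weyl_shift d c a * J b d) =
   (b == c)%:R * (J c b * X) + (- raise b) * (J c b * (\sum_d g c d * J d a))
   + (- B a) * (J c b * J b c) + g c a * (J c b * (\sum_d J b d * raise d)).
  by rewrite weyl_shift_covJ /X; ring.
under eq_bigr do under eq_bigr do rewrite e.
under eq_bigr do rewrite !big_split /= -!mulr_sumr.
rewrite !big_split /=.
have eX b : \sum_c (b == c)%:R * (J c b * X) = J b b * X.
  by rewrite (sum_supp1 (j := b)) ?eqxx ?mul1r // => i; rewrite eq_sym => /negPf ->; rewrite mul0r.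
under eq_bigr do rewrite eX.
rewrite -mulr_suml trJ mul0r add0r.
have eg b : \sum_c J c b * (\sum_d g c d * J d a) = g b a.
  rewrite -Jorth; apply: eq_bigr => c _; rewrite mulr_sumr.
  by apply: eq_bigr => d _; ring.
under eq_bigr do rewrite eg.
have eB : \sum_b - raise b * g b a = - B a.
  by rewrite -(lower_raise a) -sumrN; apply: eq_bigr => b _; rewrite gsym; ring.
rewrite eB -mulr_sumr exchange_big /=.
under [X in _ + (- B a) * X + _]eq_bigr do rewrite J2 eqxx.
rewrite sumrN sumr_const card_ord exchange_big /=.
have eJJ c : \sum_b g c a * (J c b * (\sum_d J b d * raise d)) = - (g c a * raise c).
  rewrite -mulr_sumr -mulrN; congr (_ * _).
  under eq_bigr do rewrite mulr_sumr.
  rewrite exchange_big /= (eq_bigr (fun d => (\sum_b J c b * J b d) * raise d)); last first.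
    by move=> d _; rewrite mulr_suml; apply: eq_bigr => b _; rewrite mulrA.
  under eq_bigr do rewrite J2.
  rewrite (sum_supp1 (j := c)) ?eqxx ?mulN1r // => i.
  by rewrite eq_sym => /negPf ->; rewrite oppr0 mul0r.
under eq_bigr do rewrite eJJ.
by rewrite sumrN lower_raise -mulr_natr; ring.
Qed.

End WeylShift.

Section Calculus.
Variables (R : realType) (V : normedModType R).

Lemma derive_bigsum (n : nat) (F : 'I_n -> V -> R) x v :
  (forall i, derivable (F i) x v) ->
  derive (fun y => \sum_i F i y) x v = \sum_i derive (F i) x v.
Proof. by move=> dF; rewrite -derive_sum // fct_sumE. Qed.

Lemma derivable_bigsum (n : nat) (F : 'I_n -> V -> R) x v :
  (forall i, derivable (F i) x v) -> derivable (fun y => \sum_i F i y) x v.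
Proof. by move=> dF; rewrite -fct_sumE; exact: derivable_sum. Qed.

Lemma derive_open_eq (U : set V) (f h : V -> R) x v : open U -> U x ->
  (forall y, U y -> f y = h y) -> derive f x v = derive h x v.
Proof.
move=> oU Ux fh; apply: near_eq_derive; near=> y; apply: fh.
by near: y; exact: (open_nbhs_nbhs (conj oU Ux)).
Unshelve. all: by end_near.
Qed.

End Calculus.

Definition pd_mx (R : realType) (n : nat) (T : tensor2 R n) (c : 'I_n) (x : 'rV[R]_n)
  : 'M[R]_n := \matrix_(i, j) pd (fun y => T y i j) c x.

Section DifferentiatedIdentities.
Variables (R : realType) (n : nat) (U : set 'rV[R]_n) (g J : tensor2 R n).
Variable x : 'rV[R]_n.
Hypothesis oU : open U.
Hypothesis Ux : U x.
Hypothesis dgJ : forall i j,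
  differentiable (fun y => g y i j) x /\ differentiable (fun y => J y i j) x.

Let dJ i j v : derivable (fun y => J y i j) x v.
Proof. exact/diff_derivable/(dgJ i j).2. Qed.
Let dg i j v : derivable (fun y => g y i j) x v.
Proof. exact/diff_derivable/(dgJ i j).1. Qed.

Let derive_mul (f h : 'rV[R]_n -> R) v : derivable f x v -> derivable h x v ->
  derive (fun y => f y * h y) x v = f x * derive h x v + h x * derive f x v.
Proof. exact: deriveM. Qed.

Lemma pd_mx_almost_complex c : (forall y, U y -> almost_complex J y) ->
  pd_mx J c x *m gmx J x + gmx J x *m pd_mx J c x = 0.
Proof.
move=> acJ; apply/matrixP => i j; rewrite !mxE.
have : pd (fun y => \sum_k J y i k * J y k j) c x = 0.
  rewrite /pd (@derive_open_eq _ _ U _ (fun _ => - (i == j)%:R)) //.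
    exact: derive_cst.
  by move=> y Uy; rewrite acJ.
rewrite /pd derive_bigsum => [|k]; last exact: derivableM.
rewrite (eq_bigr (fun k => J x i k * pd (fun y => J y k j) c x
                         + J x k j * pd (fun y => J y i k) c x)) => [|k _]; last first.
  exact: derive_mul.
rewrite big_split /= addrC => e; apply: etrans e.
by congr (_ + _); apply: eq_bigr => k _; rewrite !mxE mulrC.
Qed.

Lemma pd_mx_orthogonal c : (forall y, U y -> orthogonal_for g J y) ->
  (pd_mx J c x)^T *m gmx g x *m gmx J x + (gmx J x)^T *m pd_mx g c x *m gmx J x
  + (gmx J x)^T *m gmx g x *m pd_mx J c x = pd_mx g c x.
Proof.
move=> orJ; apply/matrixP => a b; rewrite [RHS]mxE.
have <- : pd (fun y => \sum_k \sum_l J y k a * J y l b * g y k l) c x =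
          pd (fun y => g y a b) c x.
  by rewrite /pd (@derive_open_eq _ _ U _ (fun y => g y a b)) // => y Uy; rewrite orJ.
have dJJ k l : derivable (fun y => J y k a * J y l b) x (delta_mx 0 c).
  exact: derivableM.
rewrite /pd derive_bigsum => [|k]; last first.
  by apply: derivable_bigsum => l; apply: derivableM.
rewrite (eq_bigr (fun k => \sum_l (J x k a * J x l b * pd (fun y => g y k l) c x
    + g x k l * (J x k a * pd (fun y => J y l b) c x
                 + J x l b * pd (fun y => J y k a) c x)))) => [|k _]; last first.
  rewrite derive_bigsum => [|l]; last by apply: derivableM.
  by apply: eq_bigr => l _; rewrite derive_mul // derive_mul.
rewrite !mxE -!big_split /= [RHS]exchange_big /=; apply: eq_bigr => l _.
rewrite !mxE !mulr_suml -!big_split /=; apply: eq_bigr => k _; rewrite !mxE.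
ring.
Qed.

End DifferentiatedIdentities.

Section WeylConnection.
Variables (R : realType) (n : nat) (U : set 'rV[R]_n).
Variables (g J : tensor2 R n) (GW : tensor3 R n).
Hypothesis oU : open U.
Hypothesis dgJ : forall x, U x -> forall i j,
  differentiable (fun y => g y i j) x /\ differentiable (fun y => J y i j) x.
Hypothesis gmetric : forall x, U x -> is_metric g x.
Hypothesis Jac : forall x, U x -> almost_complex J x.
Hypothesis Jorth : forall x, U x -> orthogonal_for g J x.
Hypothesis GWsym : forall x, U x -> forall a b c, GW x a b c = GW x a c b.
Variable B : 'rV[R]_n -> 'I_n -> R.
Hypothesis GWg : forall x, U x -> forall a b c,
  cov_metric GW g x a b c = 2 * B x a * g x b c.

Definition conn_mx x c : 'M[R]_n := \matrix_(i, j) GW x i c j.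
Definition covJ_mx x c : 'M[R]_n := \matrix_(i, j) cov_endo GW J x c i j.

Lemma gmx_J2 x : U x -> gmx J x *m gmx J x = - 1%:M.
Proof.
move=> Ux; apply/matrixP => i j; rewrite !mxE -(Jac Ux).
by apply: eq_bigr => k _; rewrite !mxE.
Qed.

Lemma gmx_orthogonal x : U x -> (gmx J x)^T *m gmx g x *m gmx J x = gmx g x.
Proof.
move=> Ux; apply/matrixP => i j; rewrite [RHS]mxE -(Jorth Ux) mxE exchange_big /=.
apply: eq_bigr => d _; rewrite !mxE mulr_suml.
by apply: eq_bigr => c _; rewrite !mxE; ring.
Qed.

Lemma gmx_sym x : U x -> (gmx g x)^T = gmx g x.
Proof. by move=> Ux; apply/matrixP => i j; rewrite !mxE (gmetric Ux).1. Qed.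

Lemma gmx_unit x : U x -> gmx g x \in unitmx.
Proof.
move=> Ux; rewrite unitmxE unitfE; apply/negP => /det0P [v v0 vG].
by have := (gmetric Ux).2 v v0; rewrite vG mul0mx mxE ltxx.
Qed.

Lemma pd_mx_weyl x c : U x -> pd_mx g c x =
  (conn_mx x c)^T *m gmx g x + gmx g x *m conn_mx x c + (2 * B x c) *: gmx g x.
Proof.
move=> Ux; apply/matrixP => a b; rewrite !mxE.
move/eqP: (GWg Ux c a b); rewrite /cov_metric subr_eq => /eqP ->.
rewrite addrC -big_split /=; congr (_ + _).
by apply: eq_bigr => d _; rewrite !mxE [g x a d * _]mulrC.
Qed.

Lemma covJ_mxE x c :
  covJ_mx x c = pd_mx J c x + conn_mx x c *m gmx J x - gmx J x *m conn_mx x c.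
Proof.
apply/matrixP => i j; rewrite !mxE /cov_endo sumrB addrA; congr (_ + _ - _).
  by apply: eq_bigr => d _; rewrite !mxE.
by apply: eq_bigr => d _; rewrite !mxE mulrC.
Qed.

Lemma covJ_mx_anticomm x : U x -> forall c, covJ_mx x c *m gmx J x = - (gmx J x *m covJ_mx x c).
Proof.
move=> Ux c; rewrite covJ_mxE.
apply: weyl_covJ_anticomm; first exact: gmx_J2.
exact: (pd_mx_almost_complex oU Ux (dgJ Ux)).
Qed.

Lemma covJ_mx_skew x : U x -> forall c, (covJ_mx x c)^T *m gmx g x = - (gmx g x *m covJ_mx x c).
Proof.
move=> Ux c; rewrite covJ_mxE.
apply: weyl_covJ_skew (pd_mx_weyl c Ux).
- exact: gmx_J2.
- exact: gmx_orthogonal.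
- exact: (pd_mx_almost_complex oU Ux (dgJ Ux)).
- exact: (pd_mx_orthogonal oU Ux (dgJ Ux)).
Qed.

Lemma ginv_g x : U x -> forall a e, \sum_d ginv g x a d * g x d e = (a == e)%:R.
Proof.
move=> Ux a e; have := congr1 (fun M : 'M[R]_n => M a e) (mulVmx (gmx_unit Ux)).
by rewrite !mxE => <-; apply: eq_bigr => d _; rewrite !mxE.
Qed.

Lemma g_ginv x : U x -> forall a e, \sum_d g x a d * ginv g x d e = (a == e)%:R.
Proof.
move=> Ux a e; have := congr1 (fun M : 'M[R]_n => M a e) (mulmxV (gmx_unit Ux)).
by rewrite !mxE => <-; apply: eq_bigr => d _; rewrite !mxE.
Qed.

Lemma J_compatibleE :
  J_compatible U GW J <-> forall x, U x -> mxfam_contr (covJ_mx x) = 0.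
Proof.
have contrE x b : mxfam_contr (covJ_mx x) 0 b = \sum_a cov_endo GW J x a a b.
  by rewrite mxE; apply: eq_bigr => a _; rewrite mxE.
split=> [compat x Ux | compat x Ux b]; last by rewrite -contrE compat // mxE.
by apply/rowP => b; rewrite contrE compat // mxE.
Qed.

Lemma totally_trace_freeE (H : tensor3 R n) (M : 'rV[R]_n -> 'I_n -> 'M[R]_n) :
  (forall x, U x -> forall a b c, H x a b c = M x c a b) ->
  totally_trace_free U g H <-> forall x, U x -> trace_free_fam (invmx (gmx g x)) (M x).
Proof.
move=> HM; suff tfx x : U x ->
    [/\ forall b, \sum_a H x a a b = 0, forall b, \sum_a H x a b a = 0
      & forall a, \sum_b \sum_c ginv g x b c * H x a b c = 0]
    <-> trace_free_fam (invmx (gmx g x)) (M x).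
  split=> tf x Ux; last by have [t1 t2 t3] := (tfx x Ux).2 (tf x Ux).
  by apply/(tfx x Ux); have [t1 [t2 t3]] := tf x Ux.
move=> Ux; have eH := HM x Ux.
have e1 b : \sum_a H x a a b = \tr (M x b) by apply: eq_bigr => a _; rewrite eH.
have e2 b : \sum_a H x a b a = mxfam_contr (M x) 0 b.
  by rewrite mxE; apply: eq_bigr => a _; rewrite eH.
have e3 a : \sum_b \sum_c ginv g x b c * H x a b c = \sum_c (M x c *m invmx (gmx g x)) a c.
  rewrite exchange_big; apply: eq_bigr => c _; rewrite mxE.
  by apply: eq_bigr => b _; rewrite eH mulrC.
split=> -[t1 t2 t3]; split.
- by move=> b; rewrite -e1.
- by apply/rowP => b; rewrite -e2 t2 mxE.
- by move=> a; rewrite -e3.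
- by move=> b; rewrite e1.
- by move=> b; rewrite e2 t2 mxE.
- by move=> a; rewrite e3.
Qed.

Lemma J_compatible_iff_trace_free (H : tensor3 R n) (M : 'rV[R]_n -> 'I_n -> 'M[R]_n) :
  (forall x, U x -> forall a b c, H x a b c = M x c a b) ->
  (forall x, U x -> trace_free_fam (invmx (gmx g x)) (M x) <-> mxfam_contr (covJ_mx x) = 0) ->
  J_compatible U GW J <-> totally_trace_free U g H.
Proof.
move=> HM tfM; rewrite (totally_trace_freeE HM); split.
  by move/J_compatibleE => compat x Ux; apply/(tfM x Ux); exact: compat.
by move=> tf; apply/J_compatibleE => x Ux; apply/(tfM x Ux); exact: tf.
Qed.

Lemma GWtensor_mx x a b c :
  GWtensor GW J x a b c = (- 2^-1 *: (gmx J x *m covJ_mx x c)) a b.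
Proof. by rewrite /GWtensor !mxE; congr (_ * _); apply: eq_bigr => d _; rewrite !mxE. Qed.

Lemma JH_GWtensor_mx x : U x -> forall a b c,
  JH J (GWtensor GW J) x a b c = (2^-1 *: covJ_mx x c) a b.
Proof.
move=> Ux a b c; have -> : JH J (GWtensor GW J) x a b c =
    (gmx J x *m (- 2^-1 *: (gmx J x *m covJ_mx x c))) a b.
  by rewrite mxE /JH; apply: eq_bigr => d _; rewrite GWtensor_mx !mxE.
by rewrite -scalemxAr mulmxA gmx_J2 // mulNmx mul1mx scalerN scaleNr opprK.
Qed.

Lemma H_XJY_GWtensor_mx x a b c : H_XJY J (GWtensor GW J) x a b c =
  mxfam_mulr (fun e => - 2^-1 *: (gmx J x *m covJ_mx x e)) (gmx J x) c a b.
Proof.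
rewrite /H_XJY summxE; apply: eq_bigr => e _.
by rewrite GWtensor_mx mulrC !mxE.
Qed.

Lemma H_JXJY_GWtensor_mx x : U x -> forall a b c, H_JXJY J (GWtensor GW J) x a b c =
  mxfam_mulr (fun e => - 2^-1 *: covJ_mx x e) (gmx J x) c a b.
Proof.
move=> Ux a b c; rewrite /H_JXJY summxE exchange_big /=; apply: eq_bigr => e _.
rewrite -mulr_suml [RHS]mxE [RHS]mulrC mxE; congr (_ * _); last by rewrite mxE.
rewrite -(JcovJJ (gmx_J2 Ux) (covJ_mx_anticomm Ux) e) mxE mulr_sumr.
by apply: eq_bigr => d _; rewrite GWtensor_mx !mxE mulrA.
Qed.

Lemma J_compatible_iff_trace_free_GW :
  J_compatible U GW J <-> totally_trace_free U g (GWtensor GW J).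
Proof.
apply: (J_compatible_iff_trace_free (fun x _ => GWtensor_mx x)) => x Ux.
exact: (trace_free_GW (gmx_J2 Ux) (gmx_unit Ux) (covJ_mx_anticomm Ux) (covJ_mx_skew Ux)).
Qed.

Lemma J_compatible_iff_trace_free_JGW :
  J_compatible U GW J <-> totally_trace_free U g (JH J (GWtensor GW J)).
Proof.
apply: (J_compatible_iff_trace_free (fun x Ux => JH_GWtensor_mx Ux)) => x Ux.
exact: (trace_free_JGW (gmx_J2 Ux) (gmx_unit Ux) (covJ_mx_anticomm Ux) (covJ_mx_skew Ux)).
Qed.

Lemma J_compatible_iff_trace_free_GW_XJY :
  J_compatible U GW J <-> totally_trace_free U g (H_XJY J (GWtensor GW J)).
Proof.
apply: (J_compatible_iff_trace_free (fun x _ => H_XJY_GWtensor_mx x)) => x Ux.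
exact: (trace_free_GW_XJY (gmx_J2 Ux) (gmx_orthogonal Ux) (gmx_unit Ux)
  (covJ_mx_anticomm Ux) (covJ_mx_skew Ux)).
Qed.

Lemma J_compatible_iff_trace_free_GW_JXJY :
  J_compatible U GW J <-> totally_trace_free U g (H_JXJY J (GWtensor GW J)).
Proof.
apply: (J_compatible_iff_trace_free (fun x Ux => H_JXJY_GWtensor_mx Ux)) => x Ux.
exact: (trace_free_GW_JXJY (gmx_J2 Ux) (gmx_orthogonal Ux) (gmx_unit Ux)
  (covJ_mx_anticomm Ux) (covJ_mx_skew Ux)).
Qed.

Lemma levi_civita_weyl x : U x -> forall a b c,
  levi_civita g x a b c = GW x a b c + weyl_shift (g x) (ginv g x) (B x) a b c.
Proof.
move=> Ux; apply: (koszul_weyl (dg := fun k i j => pd (fun y => g y i j) k x)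
  (gmetric Ux).1 (ginv_g Ux) (GWsym Ux)).
by move=> a b c; rewrite -(GWg Ux) /cov_metric addrC subrK.
Qed.

Lemma canonB_weyl x : (2 < n)%N -> U x -> mxfam_contr (covJ_mx x) = 0 ->
  forall a, canonB g J x a = B x a.
Proof.
move=> n_gt2 Ux contr0 a.
set K := weyl_shift (g x) (ginv g x) (B x).
have eLC c b : cov_endo (levi_civita g) J x c b a = cov_endo GW J x c b a
    + \sum_d (K b c d * J x d a - K d c a * J x b d).
  rewrite /cov_endo -addrA -big_split /=; congr (_ + _); apply: eq_bigr => d _.
  by rewrite !levi_civita_weyl // /K; ring.
have eW : \sum_b \sum_c J x c b * cov_endo GW J x c b a = 0.
  transitivity (mxfam_contr (fun c => gmx J x *m covJ_mx x c) 0 a).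
    rewrite exchange_big mxE; apply: eq_bigr => c _.
    by rewrite mxE; apply: eq_bigr => b _; rewrite !mxE.
  by rewrite (mxfam_contr_JcovJ (covJ_mx_anticomm Ux)) contr0 mul0mx oppr0 mxE.
have trJ : \sum_i J x i i = 0.
  rewrite -[RHS](mxtrace_J (gmx_J2 Ux) (gmx_orthogonal Ux) (gmx_sym Ux) (gmx_unit Ux)).
  by apply: eq_bigr => i _; rewrite mxE.
rewrite /canonB; under eq_bigr do under eq_bigr do rewrite eLC mulrDr.
under eq_bigr do rewrite big_split /=.
rewrite big_split /= eW add0r (weyl_shift_covJ_contr _ (gmetric Ux).1 (g_ginv Ux)) //.
- by rewrite mulKf // subr_eq0 gt_eqF // ltr_nat.
- exact: Jac.
- exact: Jorth.
Qed.

Lemma canonical_weyl_eq : (2 < n)%N -> J_compatible U GW J ->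
  forall x, U x -> forall a b c, GW x a b c = canonical_weyl g J x a b c.
Proof.
move=> n_gt2 /J_compatibleE compat x Ux a b c.
have canonBE := canonB_weyl n_gt2 Ux (compat x Ux).
rewrite /canonical_weyl !canonBE levi_civita_weyl // /weyl_shift /raise.
under [X in _ = _ - _ + X * _ - _]eq_bigr do rewrite canonBE.
ring.
Qed.

End WeylConnection.

Theorem lemma4p7 (R : realType) (n : nat) (U : set 'rV[R]_n)
    (g J : tensor2 R n) (GW : tensor3 R n) :
  (4 <= n)%N -> open U ->
  (forall x, U x -> forall i j,
      differentiable (fun y => g y i j) x /\ differentiable (fun y => J y i j) x) ->
  (forall x, U x -> is_metric g x) ->
  (forall x, U x -> almost_complex J x) ->
  (forall x, U x -> orthogonal_for g J x) ->
  is_weyl_connection U g GW ->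
  let G := GWtensor GW J in
  ((J_compatible U GW J <-> totally_trace_free U g G) /\
   (J_compatible U GW J <-> totally_trace_free U g (JH J G)) /\
   (J_compatible U GW J <-> totally_trace_free U g (H_XJY J G)) /\
   (J_compatible U GW J <-> totally_trace_free U g (H_JXJY J G))) /\
  (J_compatible U GW J ->
     forall x, U x -> forall a b c, GW x a b c = canonical_weyl g J x a b c).
Proof.
move=> n4 oU dgJ gmetric Jac Jorth [GWsym [B GWg]] G.
split; [split; [|split; [|split]]|].
- exact: (J_compatible_iff_trace_free_GW oU dgJ gmetric Jac Jorth GWg).
- exact: (J_compatible_iff_trace_free_JGW oU dgJ gmetric Jac Jorth GWg).
- exact: (J_compatible_iff_trace_free_GW_XJY oU dgJ gmetric Jac Jorth GWg).
- exact: (J_compatible_iff_trace_free_GW_JXJY oU dgJ gmetric Jac Jorth GWg).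
- exact: (canonical_weyl_eq oU dgJ gmetric Jac Jorth GWsym GWg (ltnW n4)).
Qed.
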